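(* Let $\Gamma$ be a set and $\Lambda:\Gamma\to\mathbb R^{m\times n}$ with sparsity pattern $S$. Let $L\in\mathbb R^{m\times m}$ be invertible and let $\hat S$ be the sparsity pattern of $\hat\Lambda(\cdot):=L^\top\Lambda(\cdot)$. Let $\sigma$ be a permutation of $\{1,\dots,m\}$ with $L_{i,\sigma(i)}\ne0$ for all $i$ and $P$ its permutation matrix, $Pe_i=e_{\sigma(i)}$. Assume that for every $j\in\{1,\dots,n\}$, $\operatorname{span}(\Lambda_{\cdot,j}(\Gamma))=\mathbb R^m_{S_{\cdot,j}}$. Then $S\subset P^\top\hat S$ (as sets of nonzero entries). If moreover $\|\hat S\|_0\le\|S\|_0$, then $S=P^\top\hat S$ and $L=CP^\top$ for some $S$-consistent matrix $C$.
   Context: Sparsity pattern: for $\Lambda:\Gamma\to\mathbb R^{m\times n}$, the binary matrix $S$ with $S_{i,j}=1$ iff there exists $\gamma\in\Gamma$ with $\Lambda_{i,j}(\gamma)\neq0$. $\Lambda_{\cdot,j}$ denotes the $j$-th column. For a binary vector $b\in\{0,1\}^m$, $\mathbb R^m_b=\{x\in\mathbb R^m: b_i=0\Rightarrow x_i=0\}$; $S_{\cdot,j}$ is the $j$-th column of $S$. $\|\cdot\|_0$ counts nonzero entries. $S$-consistency: for $S\in\{0,1\}^{m\times n}$, $C\in\mathbb R^{m\times m}$ is $S$-consistent iff for all $i,j$: $[\mathbb 1-S(\mathbb 1-S)^\top]^+_{i,j}=0\Rightarrow C_{i,j}=0$, with $[\cdot]^+=\max\{0,\cdot\}$ entrywise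 and $\mathbb 1$ an all-ones matrix of appropriate size. *)

From HB Require Import structures.
From mathcomp Require Import all_boot all_order all_fingroup all_algebra.
From mathcomp Require Import boolp reals.
Set Implicit Arguments. Unset Strict Implicit. Unset Printing Implicit Defensive.
Import Order.TTheory GRing.Theory Num.Theory.
Local Open Scope ring_scope.

Section Defs.
Variable R : realType.

Definition sparsity (Gamma : Type) (m n : nat) (Lam : Gamma -> 'M[R]_(m, n))
  : 'M[R]_(m, n) :=
  \matrix_(i, j) (asbool (exists g : Gamma, Lam g i j != 0))%:R.

Definition in_span (m : nat) (A : 'cV[R]_m -> Prop) (v : 'cV[R]_m) : Prop :=
  exists (k : nat) (c : 'I_k -> R) (w : 'I_k -> 'cV[R]_m),
    (forall l, A (w l)) /\ v = \sum_(l < k) c l *: w l.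

Definition Rsub (m : nat) (b : 'cV[R]_m) (x : 'cV[R]_m) : Prop :=
  forall i, b i 0 = 0 -> x i 0 = 0.

Definition norm0 (m n : nat) (A : 'M[R]_(m, n)) : nat :=
  #|[set ij : 'I_m * 'I_n | A ij.1 ij.2 != 0]|.

(* Permutation matrix P with P e_i = e_{sigma i}, i.e. P_{k,i} = [k = sigma i]. *)
Definition pmx (m : nat) (s : 'S_m) : 'M[R]_m :=
  \matrix_(k, i) (k == s i)%:R.

Definition S_consistent (m n : nat) (S : 'M[R]_(m, n)) (C : 'M[R]_m) : Prop :=
  forall i j,
    Num.max 0 ((const_mx 1 - S *m (const_mx 1 - S)^T) i j) = 0 -> C i j = 0.

End Defs.

From HB Require Import structures.
From mathcomp Require Import all_boot all_order all_fingroup all_algebra.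
From mathcomp Require Import boolp reals.
Import Order.TTheory GRing.Theory Num.Theory.
Local Open Scope ring_scope.

(* If row [k] of [L^T Lambda] vanishes identically in column [j], then the
   functional [x |-> (L^T x)_k] kills the span of the [j]-th columns, which by
   assumption contains [e_i] for every [i] in the support of [S_{.,j}]; hence
   [L_{i,k} = 0] there.  Since [L_{i, sigma i} <> 0], the pattern [S] embeds into
   [Shat] along [(i, j) |-> (sigma i, j)]; when [Shat] has no more nonzero
   entries than [S] the embedding is onto, so [S = P^T Shat].  Finally
   [C := L P] vanishes at [(i, j)] whenever some column [k] has [S_{i,k} = 1] and
   [S_{j,k} = 0], and these are exactly the positions where
   [1 - S (1 - S)^T] is nonpositive. *)

Section SparsityPattern.
Context {R : realType}.

Lemma sparsityP (Gamma : Type) m n (Lam : Gamma -> 'M[R]_(m, n)) i j :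
  reflect (exists g, Lam g i j != 0) (sparsity Lam i j != 0).
Proof.
rewrite mxE; case: asboolP => h /=; first by rewrite oner_eq0; constructor.
by rewrite eqxx; constructor.
Qed.

Lemma sparsity_neq0 (Gamma : Type) m n (Lam : Gamma -> 'M[R]_(m, n)) i j :
  sparsity Lam i j != 0 -> sparsity Lam i j = 1.
Proof. by rewrite mxE; case: asboolP => //=; rewrite eqxx. Qed.

Lemma sparsity_eq (Gamma1 Gamma2 : Type) m1 n1 m2 n2
    (Lam1 : Gamma1 -> 'M[R]_(m1, n1)) (Lam2 : Gamma2 -> 'M[R]_(m2, n2))
    i1 j1 i2 j2 :
  (sparsity Lam1 i1 j1 != 0) = (sparsity Lam2 i2 j2 != 0) ->
  sparsity Lam1 i1 j1 = sparsity Lam2 i2 j2.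
Proof.
have [/sparsity_neq0 -> | /negPn/eqP ->] := boolP (sparsity Lam1 i1 j1 != 0).
  by move=> /esym /sparsity_neq0 ->.
by move=> /esym /negPn /eqP ->.
Qed.

Lemma in_span_mulmx_eq0 {p m} {A : 'cV[R]_m -> Prop} {M : 'M[R]_(p, m)} {v} :
  (forall w, A w -> M *m w = 0) -> in_span A v -> M *m v = 0.
Proof.
move=> MA [k [c [w [Aw ->]]]]; rewrite mulmx_sumr big1 // => l _.
by rewrite -scalemxAr MA ?Aw // scaler0.
Qed.

Lemma trpmx_mulmxE m n (s : 'S_m) (A : 'M[R]_(m, n)) i j :
  ((pmx R s)^T *m A) i j = A (s i) j.
Proof.
rewrite !mxE (bigD1 (s i)) //= big1 => [|k /negbTE sik].
  by rewrite !mxE eqxx mul1r addr0.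
by rewrite !mxE sik mul0r.
Qed.

Lemma mulmx_pmxE m (s : 'S_m) (A : 'M[R]_m) i j :
  (A *m pmx R s) i j = A i (s j).
Proof.
rewrite !mxE (bigD1 (s j)) //= big1 => [|k /negbTE sjk].
  by rewrite !mxE eqxx mulr1 addr0.
by rewrite !mxE sjk mulr0.
Qed.

Lemma pmx_mulmx_tr m (s : 'S_m) : pmx R s *m (pmx R s)^T = 1%:M.
Proof.
have -> : pmx R s = (perm_mx s)^T by apply/matrixP => a b; rewrite !mxE eq_sym.
by rewrite trmxK tr_perm_mx -perm_mxM mulVg perm_mx1.
Qed.

Lemma norm0_perm_support m n (s : 'S_m) (A B : 'M[R]_(m, n)) :
  (forall i j, A i j != 0 -> B (s i) j != 0) -> (norm0 B <= norm0 A)%N ->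
  forall i j, (A i j != 0) = (B (s i) j != 0).
Proof.
move=> AB leBA.
pose f (ij : 'I_m * 'I_n) := (s ij.1, ij.2).
have f_inj : injective f by move=> [a b] [c d] [/perm_inj -> ->].
pose suppA := [set ij : 'I_m * 'I_n | A ij.1 ij.2 != 0].
pose suppB := [set ij : 'I_m * 'I_n | B ij.1 ij.2 != 0].
have sub : f @: suppA \subset suppB.
  by apply/subsetP => _ /imsetP [ij + ->]; rewrite !inE => /AB.
have eq_supp : f @: suppA = suppB.
  by apply/eqP; rewrite eqEcard sub (card_imset _ f_inj).
move=> i j; apply/idP/idP => [/AB // | Bij].
have : (s i, j) \in suppB by rewrite inE.
by rewrite -eq_supp => /imsetP [[i' j'] + [/perm_inj -> ->]]; rewrite inE.
Qed.

Lemma S_consistent_support m n (S : 'M[R]_(m, n)) (C : 'M[R]_m) :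
  (forall i k, S i k != 0 -> S i k = 1) ->
  (forall i j k, S i k != 0 -> S j k = 0 -> C i j = 0) -> S_consistent S C.
Proof.
move=> S01 CS i j; have [[k [Sik Sjk]] _ | noK] :=
  pselect (exists k, S i k != 0 /\ S j k = 0); first exact: CS Sik Sjk.
suff -> : (const_mx 1 - S *m (const_mx 1 - S)^T) i j = 1.
  by rewrite /Num.max ltr01 => /eqP; rewrite oner_eq0.
rewrite !mxE big1 ?subr0 // => k _; rewrite !mxE.
have [-> | Sik] := eqVneq (S i k) 0; first by rewrite mul0r.
have /S01 -> : S j k != 0 by apply/eqP => Sjk; apply: noK; exists k.
by rewrite subrr mulr0.
Qed.

Section SpanningColumns.
Context {Gamma : Type} {m n : nat} {Lam : Gamma -> 'M[R]_(m, n)}.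
Hypothesis span_cols : forall (j : 'I_n) (v : 'cV[R]_m),
  in_span (fun w => exists g : Gamma, w = col j (Lam g)) v <->
  Rsub (col j (sparsity Lam)) v.

Lemma sparsity_trmx_mul_eq0 (L : 'M[R]_m) k j i :
  sparsity (fun g => L^T *m Lam g) k j = 0 -> sparsity Lam i j != 0 ->
  L i k = 0.
Proof.
move=> Shat_kj Sij.
have ei_span : in_span (fun w => exists g, w = col j (Lam g)) (delta_mx i 0).
  apply/span_cols => t; rewrite [col _ _ _ _]mxE [delta_mx _ _ _ _]mxE.
  by have [-> Sij0|] := eqVneq t i => //; move: Sij; rewrite Sij0 eqxx.
have row_kills : forall w, (exists g, w = col j (Lam g)) -> row k L^T *m w = 0.
  move=> _ [g ->]; apply/matrixP => a b; rewrite [a]ord1 [b]ord1.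
  rewrite colE mulmxA -colE -row_mul [col _ _ _ _]mxE [row _ _ _ _]mxE [in RHS]mxE.
  apply/eqP/negP => Lg; move/eqP: Shat_kj; apply/negP.
  by apply/sparsityP; exists g; apply/negP.
have /matrixP/(_ 0 0) := in_span_mulmx_eq0 row_kills ei_span.
by rewrite -row_mul -colE !mxE.
Qed.

End SpanningColumns.
End SparsityPattern.

Theorem mainTheorem4 (R : realType) (Gamma : Type) (m n : nat)
  (Lam : Gamma -> 'M[R]_(m, n)) (L : 'M[R]_m) (sigma : 'S_m) :
  L \in unitmx ->
  (forall i, L i (sigma i) != 0) ->
  (forall j : 'I_n, forall v : 'cV[R]_m,
     in_span (fun w => exists g : Gamma, w = col j (Lam g)) v <->
     Rsub (col j (sparsity Lam)) v) ->
  let S := sparsity Lam in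
  let Shat := sparsity (fun g => L^T *m Lam g) in
  let P := pmx R sigma in
  (forall i j, S i j != 0 -> (P^T *m Shat) i j != 0) /\
  ((norm0 Shat <= norm0 S)%N ->
     S = P^T *m Shat /\ exists C : 'M[R]_m, S_consistent S C /\ L = C *m P^T).
Proof.
move=> _ L_diag span_cols S Shat P.
have orth := sparsity_trmx_mul_eq0 span_cols L.
have S_Shat i j : S i j != 0 -> Shat (sigma i) j != 0.
  by move=> Sij; apply: contraNneq (L_diag i) => /orth/(_ Sij) ->.
split=> [i j|le_Shat_S]; first by rewrite trpmx_mulmxE; apply: S_Shat.
have S_eq i j : S i j = Shat (sigma i) j.
  by apply: sparsity_eq; apply: norm0_perm_support S_Shat le_Shat_S i j.
have SE : S = P^T *m Shat by apply/matrixP => i j; rewrite trpmx_mulmxE S_eq.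
split=> //; exists (L *m P); split; last by rewrite -mulmxA pmx_mulmx_tr mulmx1.
apply: S_consistent_support => [i k|i j k Sik Sjk]; first exact: sparsity_neq0.
rewrite mulmx_pmxE; apply: orth Sik.
by rewrite -S_eq.
Qed.
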